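(* Let $T>0$ and let $\mathcal F(t,r)$ be continuous on $[0,T]\times(0,\infty)$ with $|\mathcal F(t,r)|\le\frac{C\varepsilon^2}{1+r^2+t^2}$. There is $c>0$ such that for any $\delta\in(0,1)$ with $\varepsilon\le c\delta^2$ and any fixed $\ell>0$: if $(\theta(t),a(t))$, $t\in[0,T]$, $a(t)>0$, solves $\dot\theta=-\lambda\mathcal F(t,\tilde R)\partial_a\tilde R$, $\dot a=\lambda\mathcal F(t,\tilde R)\partial_\theta\tilde R$ with $\tilde R=R(\theta+at,a,\ell)$ and $(\theta(0),a(0),\ell)\in\mathcal D(\delta)$, then $(\theta(t),a(t),\ell)\in\mathcal D(\delta/2)$ for all $t\in[0,T]$.
   Context: Fix $m>0$, $\lambda>0$. For $a,\ell>0$: $\kappa=(1+4a^2\ell/m^2)^{-1/2}$, $p=\frac{m}{2a^2\kappa}$; $G_\kappa(x)=\sqrt{x^2-1}-\kappa\ln(x+\sqrt{x^2-1})$ on $[1,\infty)$, $H_\kappa=G_\kappa^{-1}$; $R(\theta,a,\ell)=pH_\kappa(|\theta|/p)-p\kappa$; $\partial_\theta\tilde R,\partial_a\tilde R$ are the partial derivatives of $(\theta,a)\mapsto R(\theta+at,a,\ell)$. $\mathcal D(\delta)=\{(\theta,a,\ell)\in\mathbb R\times(0,\infty)^2: a\langle\ell\rangle^{1/2}\ge\delta\}$, $\langle x\rangle=(2+|x|^2)^{1/2}$. *)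

From Stdlib Require Import Reals ClassicalEpsilon.
From Coquelicot Require Import Coquelicot.
Open Scope R_scope.

Definition kappa (m a l : R) : R := / sqrt (1 + 4 * a ^ 2 * l / m ^ 2).

Definition pp (m a l : R) : R := m / (2 * a ^ 2 * kappa m a l).

Definition Gk (k x : R) : R := sqrt (x ^ 2 - 1) - k * ln (x + sqrt (x ^ 2 - 1)).

(* H_kappa = G_kappa^{-1}: the (unique) x >= 1 with G_kappa x = y. *)
Definition Hk (k y : R) : R :=
  epsilon (inhabits 1) (fun x => 1 <= x /\ Gk k x = y).

Definition Rfun (m th a l : R) : R :=
  pp m a l * Hk (kappa m a l) (Rabs th / pp m a l) - pp m a l * kappa m a l.

Definition Rt (m t l th a : R) : R := Rfun m (th + a * t) a l.

Definition dth_Rt (m t l th a : R) : R := Derive (fun th' => Rt m t l th' a) th.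
Definition da_Rt (m t l th a : R) : R := Derive (fun a' => Rt m t l th a') a.

Definition jap (x : R) : R := sqrt (2 + x ^ 2).

Definition inD (delta th a l : R) : Prop :=
  0 < a /\ 0 < l /\ a * sqrt (jap l) >= delta.

Definition cont_on_strip (T : R) (F : R -> R -> R) : Prop :=
  forall t r, 0 <= t <= T -> 0 < r ->
    filterlim (fun z : R * R => F (fst z) (snd z))
      (within (fun z : R * R => 0 <= fst z <= T /\ 0 < snd z) (locally (t, r)))
      (locally (F t r)).

Definition cont_on_interval (T : R) (f : R -> R) : Prop :=
  forall t, 0 <= t <= T ->
    filterlim f (within (fun s => 0 <= s <= T) (locally t)) (locally (f t)).

From Stdlib Require Import Reals Lra Psatz ClassicalEpsilon.
From Coquelicot Require Import Coquelicot.
Open Scope R_scope.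

(* Write [u = theta + a t] and [r(t) = R(u, a, l)].  The flow is Hamiltonian in [(theta, a)],
   so [r' = a dR/dtheta] while [(a^2)' = 2 a lam F dR/dtheta].  The angle
   [Q = sign u (atan r - rho a)], where [rho a = atan R(0, a, l)], satisfies
   [Q' = a |dR/dtheta| / (1 + r^2) - lam F |dR/dtheta| rho'(a)], and since
   [|F| <= C eps^2 / (1 + r^2)] and [|rho'(a)| <= 2 a / m], the first term controls the error
   in [(a^2)'].  Hence [a^2 + 4 lam C eps^2 Q] is nondecreasing, and [|Q| <= pi/2 - rho a]
   bounds the possible loss of [a^2].  Finally [(pi/2 - rho a) <l> <= 2 m + 4 + 2 a <l>^(1/2)],
   so after multiplying by [<l>] the loss is at most linear in [a <l>^(1/2)], which stays
   above [delta / 2] once [eps <= c delta^2].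
   The profile [H_k] is handled through [G_k' >= 1 - k]; at [theta = 0] the kink of [|theta|]
   disappears because [H_k(y) - 1 = O(y^2)]. *)

Lemma filterlim_locally_Rabs {T} (F : (T -> Prop) -> Prop) {FF : Filter F}
    (f : T -> R) (c : R) :
  filterlim f F (locally c) <->
  forall eps, 0 < eps -> F (fun s => Rabs (f s - c) < eps).
Proof.
  rewrite filterlim_locally. split.
  - intros H eps Heps. exact (H (mkposreal eps Heps)).
  - intros H eps. apply H, cond_pos.
Qed.

Section FilterlimR.
Context {T : Type} (F : (T -> Prop) -> Prop) {FF : Filter F}.

Lemma filterlim_gt (f : T -> R) (c x : R) :
  filterlim f F (locally c) -> x < c -> F (fun s => x < f s).
Proof.
  intros Hf Hx. apply (filter_imp (fun s => Rabs (f s - c) < c - x)).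
  - intros s Hs. apply Rabs_def2 in Hs. lra.
  - apply (proj1 (filterlim_locally_Rabs F f c) Hf). lra.
Qed.

Lemma filterlim_lt (f : T -> R) (c x : R) :
  filterlim f F (locally c) -> c < x -> F (fun s => f s < x).
Proof.
  intros Hf Hx. apply (filter_imp (fun s => Rabs (f s - c) < x - c)).
  - intros s Hs. apply Rabs_def2 in Hs. lra.
  - apply (proj1 (filterlim_locally_Rabs F f c) Hf). lra.
Qed.

Lemma filterlim_continuous_comp (f : T -> R) (g : R -> R) (c : R) :
  filterlim f F (locally c) -> continuous g c ->
  filterlim (fun s => g (f s)) F (locally (g c)).
Proof. intros Hf Hg. exact (filterlim_comp _ _ _ f g F (locally c) _ Hf Hg). Qed.

Lemma filterlim_plus_fun (f g : T -> R) (a b : R) :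
  filterlim f F (locally a) -> filterlim g F (locally b) ->
  filterlim (fun s => f s + g s) F (locally (a + b)).
Proof. intros Hf Hg. exact (filterlim_comp_2 f g Rplus Hf Hg (filterlim_plus a b)). Qed.

Lemma filterlim_mult_fun (f g : T -> R) (a b : R) :
  filterlim f F (locally a) -> filterlim g F (locally b) ->
  filterlim (fun s => f s * g s) F (locally (a * b)).
Proof. intros Hf Hg. exact (filterlim_comp_2 f g Rmult Hf Hg (filterlim_mult a b)). Qed.

Lemma filterlim_minus_fun (f g : T -> R) (a b : R) :
  filterlim f F (locally a) -> filterlim g F (locally b) ->
  filterlim (fun s => f s - g s) F (locally (a - b)).
Proof.
  intros Hf Hg. apply (filterlim_plus_fun f (fun s => - g s) a (- b) Hf).
  refine (filterlim_continuous_comp g Ropp b Hg _).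
  apply (ex_derive_continuous (V := R_NormedModule)). auto_derive. exact I.
Qed.

Lemma filterlim_inv_fun (f : T -> R) (a : R) :
  filterlim f F (locally a) -> a <> 0 ->
  filterlim (fun s => / f s) F (locally (/ a)).
Proof.
  intros Hf Ha. apply (filterlim_continuous_comp f Rinv a Hf).
  apply (ex_derive_continuous (V := R_NormedModule)). auto_derive. exact Ha.
Qed.

End FilterlimR.

Lemma is_derive_Rmult (f g : R -> R) (x df dg : R) :
  is_derive f x df -> is_derive g x dg ->
  is_derive (fun t => f t * g t) x (df * g x + f x * dg).
Proof. intros Hf Hg. apply (is_derive_mult f g x df dg Hf Hg), Rmult_comm. Qed.

Lemma is_derive_continuous (f : R -> R) (x d : R) : is_derive f x d -> continuous f x.
Proof. intros H. apply (ex_derive_continuous (V := R_NormedModule)). now exists d. Qed.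

Lemma is_derive_diff_quot (f : R -> R) (x l : R) :
  is_derive f x l <->
  filterlim (fun s => (f s - f x) / (s - x)) (locally' x) (locally l).
Proof.
  rewrite is_derive_Reals, filterlim_locally_Rabs by apply locally'_filter. split.
  - intros H eps Heps. destruct (H eps Heps) as [d Hd]. exists d.
    intros s Hs Hsx. change (Rabs (s - x) < d) in Hs.
    specialize (Hd (s - x) ltac:(lra) Hs). now rewrite Rplus_minus in Hd.
  - intros H eps Heps. destruct (H eps Heps) as [d Hd]. exists d.
    intros h Hh Hhd.
    assert (Hball : ball x d (x + h)).
    { change (Rabs (x + h - x) < d). now replace (x + h - x) with h by ring. }
    specialize (Hd (x + h) Hball ltac:(lra)).
    now replace (x + h - x) with h in Hd by ring.
Qed.

Definition slope (g : R -> R) (x0 d x : R) : R :=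
  if Req_EM_T x x0 then d else (g x - g x0) / (x - x0).

Lemma slope_spec (g : R -> R) (x0 d x : R) : g x - g x0 = slope g x0 d x * (x - x0).
Proof. unfold slope. destruct (Req_EM_T x x0) as [->|Hx]; [ring | field; lra]. Qed.

Lemma filterlim_slope (g : R -> R) (x0 d : R) :
  is_derive g x0 d -> filterlim (slope g x0 d) (locally x0) (locally d).
Proof.
  rewrite is_derive_diff_quot, filterlim_locally_Rabs by apply locally'_filter.
  intros Hg. apply filterlim_locally_Rabs; [apply locally_filter|].
  intros eps Heps. destruct (Hg eps Heps) as [e He]. exists e.
  intros x Hx. unfold slope. destruct (Req_EM_T x x0) as [_|Hne].
  - rewrite Rminus_eq_0, Rabs_R0. exact Heps.
  - exact (He x Hx Hne).
Qed.

Lemma locally'_of_locally (x : R) (P : R -> Prop) : locally x P -> locally' x P.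
Proof. unfold locally', within. apply filter_imp. auto. Qed.

Lemma is_derive_of_factor (X N sigma : R -> R) (s0 n sigma0 : R) :
  is_derive N s0 n -> filterlim sigma (locally s0) (locally sigma0) -> sigma0 <> 0 ->
  locally s0 (fun s => N s - N s0 = sigma s * (X s - X s0)) ->
  is_derive X s0 (n / sigma0).
Proof.
  intros HN Hsig Hsig0 Hfac.
  assert (Hsig' : filterlim sigma (locally' s0) (locally sigma0)).
  { exact (filterlim_filter_le_1 sigma (locally'_of_locally s0) Hsig). }
  assert (Hnz : locally s0 (fun s => sigma s <> 0)).
  { apply (filter_imp (fun s => Rabs (sigma s - sigma0) < Rabs sigma0)).
    - intros s Hs Hs0. rewrite Hs0, Rminus_0_l, Rabs_Ropp in Hs. lra.
    - apply (proj1 (filterlim_locally_Rabs _ sigma sigma0) Hsig), Rabs_pos_lt, Hsig0. }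
  apply is_derive_diff_quot.
  apply (filterlim_ext_loc (fun s => (N s - N s0) / (s - s0) * / sigma s)).
  - unfold locally', within. generalize (filter_and _ _ Hfac Hnz).
    apply filter_imp. intros s [Hs Hs0] Hss0. rewrite Hs. field. split; lra.
  - apply (filterlim_mult_fun (locally' s0)).
    + now apply is_derive_diff_quot.
    + now apply (filterlim_inv_fun (locally' s0)).
Qed.

Lemma is_derive_0_of_dominated (f g : R -> R) (s0 : R) :
  is_derive g s0 0 ->
  locally s0 (fun s => Rabs (f s - f s0) <= Rabs (g s - g s0)) ->
  is_derive f s0 0.
Proof.
  rewrite !is_derive_diff_quot, !filterlim_locally_Rabs by apply locally'_filter.
  intros Hg Hdom eps Heps.
  generalize (filter_and _ _ (Hg eps Heps) (locally'_of_locally s0 _ Hdom)).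
  apply filter_imp. intros s [Hs Hds]. rewrite Rminus_0_r in *.
  destruct (Req_dec s s0) as [->|Hne].
  - rewrite !Rminus_eq_0. unfold Rdiv. rewrite Rmult_0_l, Rabs_R0. exact Heps.
  - rewrite Rabs_div in * by lra.
    apply (Rle_lt_trans _ (Rabs (g s - g s0) / Rabs (s - s0))); [|exact Hs].
    apply Rmult_le_compat_r; [|exact Hds].
    apply Rlt_le, Rinv_0_lt_compat, Rabs_pos_lt. lra.
Qed.

Lemma filterlim_within_near (f : R -> R) (a b x : R) :
  filterlim f (within (fun s => a <= s <= b) (locally x)) (locally (f x)) ->
  forall eta, 0 < eta -> exists d, 0 < d /\
    forall s, a <= s <= b -> Rabs (s - x) < d -> Rabs (f s - f x) < eta.
Proof.
  intros Hf eta Heta.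
  destruct (proj1 (filterlim_locally_Rabs _ f (f x)) Hf eta Heta) as [d Hd].
  exists d. split; [apply cond_pos|]. intros s Hs Hsx. exact (Hd s Hsx Hs).
Qed.

Lemma nondecreasing_of_derive_nonneg_open (f : R -> R) (a b : R) :
  (forall x, a < x < b -> exists d, 0 <= d /\ is_derive f x d) ->
  forall x y, a < x <= y -> y < b -> f x <= f y.
Proof.
  intros Hd x y Hxy Hy. destruct (Req_dec x y) as [<-|Hne]; [lra|].
  destruct (MVT_gen f x y (Derive f)) as [c [Hc Hmvt]];
    rewrite ?Rmin_left, ?Rmax_right in * by lra.
  - intros z Hz. destruct (Hd z ltac:(lra)) as [d [_ Hdz]].
    apply Derive_correct. exists d. exact Hdz.
  - intros z Hz. destruct (Hd z ltac:(lra)) as [d [_ Hdz]].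
    apply continuity_pt_filterlim. exact (is_derive_continuous f z d Hdz).
  - destruct (Hd c ltac:(lra)) as [d [Hd0 Hdc]].
    rewrite (is_derive_unique f c d Hdc) in Hmvt. nra.
Qed.

Lemma nondecreasing_of_derive_nonneg (f : R -> R) (a b : R) :
  (forall x, a < x < b -> exists d, 0 <= d /\ is_derive f x d) ->
  (forall x, a <= x <= b ->
     filterlim f (within (fun s => a <= s <= b) (locally x)) (locally (f x))) ->
  forall x, a <= x <= b -> f a <= f x.
Proof.
  intros Hd Hc. pose proof (nondecreasing_of_derive_nonneg_open f a b Hd) as Hopen.
  assert (Hinner : forall y, a < y < b -> f a <= f y).
  { intros y Hy. apply Rnot_lt_le. intros Hlt.
    destruct (filterlim_within_near f a b a (Hc a ltac:(lra)) (f a - f y) ltac:(lra))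
      as [d [Hd0 Hnear]].
    set (h := Rmin ((y - a) / 2) (d / 2)).
    assert (0 < h) by (apply Rmin_pos; lra).
    assert (h <= (y - a) / 2) by apply Rmin_l.
    assert (h <= d / 2) by apply Rmin_r.
    assert (Hsd : Rabs (a + h - a) < d) by (rewrite Rabs_right; lra).
    apply (Hnear (a + h) ltac:(lra)), Rabs_def2 in Hsd.
    assert (f (a + h) <= f y) by (apply Hopen; lra). lra. }
  intros x Hx. destruct (Req_dec x a) as [->|Hxa]; [lra|].
  destruct (Req_dec x b) as [->|Hxb]; [|apply Hinner; lra].
  apply Rnot_lt_le. intros Hlt.
  destruct (filterlim_within_near f a b b (Hc b ltac:(lra)) (f a - f b) ltac:(lra))
    as [d [Hd0 Hnear]].
  set (h := Rmin ((b - a) / 2) (d / 2)).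
  assert (0 < h) by (apply Rmin_pos; lra).
  assert (h <= (b - a) / 2) by apply Rmin_l.
  assert (h <= d / 2) by apply Rmin_r.
  assert (Hsd : Rabs (b - h - b) < d) by (rewrite Rabs_left; lra).
  apply (Hnear (b - h) ltac:(lra)), Rabs_def2 in Hsd.
  assert (f a <= f (b - h)) by (apply Hinner; lra). lra.
Qed.

Lemma nondecreasing_of_derive_nonneg_continuous (f : R -> R) (a b : R) :
  (forall x, a < x < b -> exists d, 0 <= d /\ is_derive f x d) ->
  (forall x, a <= x <= b -> continuous f x) ->
  a <= b -> f a <= f b.
Proof.
  intros Hd Hc Hab. apply (nondecreasing_of_derive_nonneg f a b Hd); [|lra].
  intros x Hx. exact (filterlim_filter_le_1 f (filter_le_within _) (Hc x Hx)).
Qed.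

Lemma sign_cases (x : R) :
  (x < 0 /\ sign x = -1) \/ (x = 0 /\ sign x = 0) \/ (0 < x /\ sign x = 1).
Proof.
  destruct (Rtotal_order x 0) as [H|[H|H]].
  - left. split; [exact H | now apply sign_eq_m1].
  - right; left. split; [exact H | rewrite H; apply sign_0].
  - right; right. split; [exact H | now apply sign_eq_1].
Qed.

Lemma Rabs_sign (x : R) : Rabs (sign x) = sign x * sign x.
Proof.
  destruct (sign_cases x) as [[_ ->]|[[_ ->]|[_ ->]]];
    [rewrite Rabs_left | rewrite Rabs_R0 | rewrite Rabs_R1]; lra.
Qed.

Lemma Rabs_sign_le (x : R) : Rabs (sign x) <= 1.
Proof.
  destruct (sign_cases x) as [[_ ->]|[[_ ->]|[_ ->]]];
    [rewrite Rabs_left | rewrite Rabs_R0 | rewrite Rabs_R1]; lra.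
Qed.

Lemma Rabs_sign_mul_le (x y : R) : Rabs (sign x * y) <= Rabs y.
Proof.
  rewrite Rabs_mult. assert (H := Rabs_sign_le x). assert (H0 := Rabs_pos y). nra.
Qed.

Lemma sign_eventually {T} (F : (T -> Prop) -> Prop) {FF : Filter F} (u : T -> R) (u0 : R) :
  filterlim u F (locally u0) -> u0 <> 0 -> F (fun s => sign (u s) = sign u0).
Proof.
  intros Hu Hu0. destruct (Rtotal_order u0 0) as [Hneg|[|Hpos]]; [| contradiction |].
  - apply (filter_imp (fun s => u s < 0)), (filterlim_lt F u u0 0 Hu Hneg).
    intros s Hs. now rewrite !sign_eq_m1.
  - apply (filter_imp (fun s => 0 < u s)), (filterlim_gt F u u0 0 Hu Hpos).
    intros s Hs. now rewrite !sign_eq_1.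
Qed.

Lemma filterlim_sign_mul {T} (F : (T -> Prop) -> Prop) {FF : Filter F}
    (u D : T -> R) (u0 D0 : R) :
  filterlim u F (locally u0) -> filterlim D F (locally D0) -> (u0 = 0 -> D0 = 0) ->
  filterlim (fun s => sign (u s) * D s) F (locally (sign u0 * D0)).
Proof.
  intros Hu HD Hz. destruct (Req_dec u0 0) as [Hu0|Hu0].
  - assert (HD0 := Hz Hu0). subst D0. rewrite Rmult_0_r.
    apply (filterlim_locally_Rabs F). intros eps Heps.
    apply (filter_imp (fun s => Rabs (D s - 0) < eps)).
    + intros s Hs. rewrite Rminus_0_r in *.
      eapply Rle_lt_trans; [apply Rabs_sign_mul_le | exact Hs].
    + exact (proj1 (filterlim_locally_Rabs F D 0) HD eps Heps).
  - apply (filterlim_ext_loc (fun s => sign u0 * D s)).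
    + apply (filter_imp _ _ (fun s Hs => f_equal (fun c => c * D s) (eq_sym Hs))).
      exact (sign_eventually F u u0 Hu Hu0).
    + apply (filterlim_mult_fun F); [apply filterlim_const | exact HD].
Qed.

Lemma is_derive_sign_mul (u D : R -> R) (t d : R) :
  continuous u t -> is_derive D t d -> (u t = 0 -> D t = 0 /\ d = 0) ->
  is_derive (fun s => sign (u s) * D s) t (sign (u t) * d).
Proof.
  intros Hu HD Hz. destruct (Req_dec (u t) 0) as [Hu0|Hu0].
  - destruct (Hz Hu0) as [HD0 Hd0]. rewrite Hd0, Rmult_0_r in *. subst d.
    apply (is_derive_0_of_dominated _ D t HD).
    apply filter_forall. intros s. rewrite Hu0, sign_0, HD0, Rmult_0_l, !Rminus_0_r.
    apply Rabs_sign_mul_le.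
  - apply (is_derive_ext_loc (fun s => sign (u t) * D s)).
    + apply (filter_imp _ _ (fun s Hs => f_equal (fun c => c * D s) (eq_sym Hs))).
      exact (sign_eventually _ u (u t) Hu Hu0).
    + now apply is_derive_scal.
Qed.

Lemma atan_le_id (x : R) : 0 <= x -> atan x <= x.
Proof.
  intros Hx.
  assert (D : forall y, is_derive (fun y => y - atan y) y (1 - / (1 + y²))).
  { intros y. apply (is_derive_minus (fun y => y) atan);
      [apply (is_derive_id (K := R_AbsRing)) | apply is_derive_atan]. }
  enough (0 - atan 0 <= x - atan x) by (rewrite atan_0 in *; lra).
  apply (nondecreasing_of_derive_nonneg_continuous (fun y => y - atan y));
    [intros y _ | intros y _ | exact Hx].
  - exists (1 - / (1 + y²)). split; [|apply D].
    assert (1 <= 1 + y²) by (pose proof (Rle_0_sqr y); lra).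
    enough (/ (1 + y²) <= 1) by lra.
    rewrite <- Rinv_1 at 2. apply Rinv_le_contravar; lra.
  - exact (is_derive_continuous _ y _ (D y)).
Qed.

Lemma PI2_minus_atan_le_inv (x : R) : 0 < x -> PI / 2 - atan x <= / x.
Proof.
  intros Hx. rewrite <- atan_inv by exact Hx. apply atan_le_id.
  left. now apply Rinv_0_lt_compat.
Qed.

Definition sqrtm1 (x : R) : R := sqrt (x ^ 2 - 1).
Definition arcosh (x : R) : R := ln (x + sqrtm1 x).

Lemma Gk_eq (k x : R) : Gk k x = sqrtm1 x - k * arcosh x.
Proof. reflexivity. Qed.

Lemma sqrtm1_sqr (x : R) : 1 <= x -> sqrtm1 x ^ 2 = x ^ 2 - 1.
Proof. intros Hx. unfold sqrtm1. rewrite pow2_sqrt; nra. Qed.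

Lemma sqrtm1_ge0 (x : R) : 0 <= sqrtm1 x.
Proof. apply sqrt_pos. Qed.

Lemma sqrtm1_gt0 (x : R) : 1 < x -> 0 < sqrtm1 x.
Proof. intros Hx. apply sqrt_lt_R0. nra. Qed.

Lemma sqrtm1_lt (x : R) : 1 <= x -> sqrtm1 x < x.
Proof. intros Hx. pose proof (sqrtm1_sqr x Hx). pose proof (sqrtm1_ge0 x). nra. Qed.

Lemma sqrtm1_1 : sqrtm1 1 = 0.
Proof. unfold sqrtm1. replace (1 ^ 2 - 1) with 0 by ring. apply sqrt_0. Qed.

Lemma arcosh_1 : arcosh 1 = 0.
Proof. unfold arcosh. rewrite sqrtm1_1, Rplus_0_r. apply ln_1. Qed.

Lemma arcosh_ge0 (x : R) : 1 <= x -> 0 <= arcosh x.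
Proof.
  intros Hx. unfold arcosh. rewrite <- ln_1. pose proof (sqrtm1_ge0 x).
  apply ln_le; lra.
Qed.

Lemma Gk_1 (k : R) : Gk k 1 = 0.
Proof. rewrite Gk_eq, sqrtm1_1, arcosh_1. ring. Qed.

Lemma is_derive_sqrtm1 (x : R) : 1 < x -> is_derive sqrtm1 x (x / sqrtm1 x).
Proof.
  intros Hx. pose proof (sqrtm1_gt0 x Hx). unfold sqrtm1 in *.
  auto_derive; [nra |]. replace (x * (x * 1) + - (1)) with (x ^ 2 - 1) by ring.
  field. lra.
Qed.

Lemma is_derive_arcosh (x : R) : 1 < x -> is_derive arcosh x (/ sqrtm1 x).
Proof.
  intros Hx. pose proof (sqrtm1_gt0 x Hx).
  replace (/ sqrtm1 x) with ((1 + x / sqrtm1 x) * / (x + sqrtm1 x)) by (field; lra).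
  apply (is_derive_comp ln (fun x => x + sqrtm1 x)).
  - apply is_derive_ln. lra.
  - apply (is_derive_plus (fun x => x) sqrtm1).
    + apply (is_derive_id (K := R_AbsRing)).
    + now apply is_derive_sqrtm1.
Qed.

Lemma continuous_sqrtm1 (x : R) : continuous sqrtm1 x.
Proof.
  apply continuous_sqrt_comp, (is_derive_continuous _ x (2 * x)).
  auto_derive; [exact I | ring].
Qed.

Lemma continuous_arcosh (x : R) : 1 <= x -> continuous arcosh x.
Proof.
  intros Hx. pose proof (sqrtm1_ge0 x).
  apply (continuous_comp (fun x => x + sqrtm1 x) ln).
  - apply (continuous_plus (fun x => x) sqrtm1); [apply continuous_id | apply continuous_sqrtm1].
  - apply continuous_ln. lra.
Qed.

Lemma continuous_Gk (k x : R) : 1 <= x -> continuous (Gk k) x.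
Proof.
  intros Hx. apply (continuous_minus sqrtm1 (fun x => k * arcosh x)).
  - apply continuous_sqrtm1.
  - apply (continuous_scal_r k arcosh). now apply continuous_arcosh.
Qed.

Lemma is_derive_Gk (k x : R) : 1 < x -> is_derive (Gk k) x ((x - k) / sqrtm1 x).
Proof.
  intros Hx. pose proof (sqrtm1_gt0 x Hx).
  replace ((x - k) / sqrtm1 x) with (x / sqrtm1 x - k * / sqrtm1 x) by (field; lra).
  apply (is_derive_minus sqrtm1 (fun x => k * arcosh x)).
  - now apply is_derive_sqrtm1.
  - apply is_derive_scal. now apply is_derive_arcosh.
Qed.

Lemma Gk_sub_ge (k x0 x1 : R) : 0 < k < 1 -> 1 <= x0 <= x1 ->
  (1 - k) * (x1 - x0) <= Gk k x1 - Gk k x0.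
Proof.
  intros Hk1 Hx.
  enough (Gk k x0 - (1 - k) * x0 <= Gk k x1 - (1 - k) * x1) by lra.
  apply (nondecreasing_of_derive_nonneg_continuous (fun x => Gk k x - (1 - k) * x));
    [intros x Hx' | intros x Hx' | lra].
  - pose proof (sqrtm1_gt0 x ltac:(lra)). pose proof (sqrtm1_lt x ltac:(lra)).
    exists ((x - k) / sqrtm1 x - (1 - k)). split.
    + enough (1 - k <= (x - k) / sqrtm1 x) by lra.
      apply Rle_div_r; [lra | nra].
    + apply (is_derive_minus (Gk k) (fun x => (1 - k) * x)).
      * apply is_derive_Gk. lra.
      * auto_derive; [exact I | ring].
  - apply (continuous_minus (Gk k) (fun x => (1 - k) * x)).
    + apply continuous_Gk. lra.
    + apply (is_derive_continuous _ x (1 - k)). auto_derive; [exact I | ring].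
Qed.

Lemma Gk_ge (k x : R) : 0 < k < 1 -> 1 <= x -> (1 - k) * sqrtm1 x <= Gk k x.
Proof.
  intros Hk1 Hx.
  enough (Gk k 1 - (1 - k) * sqrtm1 1 <= Gk k x - (1 - k) * sqrtm1 x)
    by (rewrite Gk_1, sqrtm1_1 in *; lra).
  apply (nondecreasing_of_derive_nonneg_continuous (fun x => Gk k x - (1 - k) * sqrtm1 x));
    [intros y Hy | intros y Hy | lra].
  - pose proof (sqrtm1_gt0 y ltac:(lra)).
    exists (k * (y - 1) / sqrtm1 y). split.
    + apply Rdiv_le_0_compat; nra.
    + replace (k * (y - 1) / sqrtm1 y)
        with ((y - k) / sqrtm1 y - (1 - k) * (y / sqrtm1 y)) by (field; lra).
      apply (is_derive_minus (Gk k) (fun x => (1 - k) * sqrtm1 x)).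
      * apply is_derive_Gk. lra.
      * apply is_derive_scal, is_derive_sqrtm1. lra.
  - apply (continuous_minus (Gk k) (fun x => (1 - k) * sqrtm1 x)).
    + apply continuous_Gk. lra.
    + apply (continuous_scal_r (1 - k) sqrtm1), continuous_sqrtm1.
Qed.

Lemma Gk_dist_ge (k x0 x1 : R) : 0 < k < 1 -> 1 <= x0 -> 1 <= x1 ->
  (1 - k) * Rabs (x1 - x0) <= Rabs (Gk k x1 - Gk k x0).
Proof.
  intros Hk1 Hx0 Hx1. destruct (Rle_dec x0 x1) as [Hle|Hlt].
  - pose proof (Gk_sub_ge k x0 x1 Hk1 ltac:(lra)). rewrite !Rabs_right; nra.
  - pose proof (Gk_sub_ge k x1 x0 Hk1 ltac:(lra)).
    rewrite (Rabs_left1 (x1 - x0)), (Rabs_left1 (Gk k x1 - Gk k x0)); nra.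
Qed.

Lemma Gk_inj (k x0 x1 : R) : 0 < k < 1 -> 1 <= x0 -> 1 <= x1 ->
  Gk k x0 = Gk k x1 -> x0 = x1.
Proof.
  intros Hk1 Hx0 Hx1 Heq. pose proof (Gk_dist_ge k x0 x1 Hk1 Hx0 Hx1) as H.
  rewrite Heq, Rminus_eq_0, Rabs_R0 in H. pose proof (Rabs_pos (x1 - x0)).
  assert (Habs : Rabs (x1 - x0) = 0) by nra. apply Rabs_eq_0 in Habs. lra.
Qed.

Lemma Gk_surj (k y : R) : 0 < k < 1 -> 0 <= y -> exists x, 1 <= x /\ Gk k x = y.
Proof.
  intros Hk1 Hy. destruct (Req_dec y 0) as [->|Hy0].
  { exists 1. split; [lra | apply Gk_1]. }
  set (b := 2 + y / (1 - k)).
  assert (Hyk : 0 <= y / (1 - k)) by (apply Rdiv_le_0_compat; lra).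
  destruct (Ranalysis5.IVT_interv (fun x => Gk k x - y) 1 b) as [x [Hx Hgx]].
  - intros x Hx. apply continuity_pt_filterlim.
    apply (continuous_minus (Gk k) (fun _ => y)).
    + apply continuous_Gk. lra.
    + apply continuous_const.
  - unfold b. lra.
  - cbv beta. rewrite Gk_1. lra.
  - pose proof (Gk_sub_ge k 1 b Hk1 ltac:(unfold b; lra)) as H. rewrite Gk_1 in H.
    assert ((1 - k) * (b - 1) = y + (1 - k)) by (unfold b; field; lra). lra.
  - exists x. split; lra.
Qed.

Lemma Hk_spec (k y : R) : 0 < k < 1 -> 0 <= y -> 1 <= Hk k y /\ Gk k (Hk k y) = y.
Proof.
  intros Hk1 Hy. apply (epsilon_spec (inhabits 1) (fun x => 1 <= x /\ Gk k x = y)).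
  now apply Gk_surj.
Qed.

Lemma Hk_0 (k : R) : 0 < k < 1 -> Hk k 0 = 1.
Proof.
  intros Hk1. destruct (Hk_spec k 0 Hk1 ltac:(lra)) as [H1 H2].
  apply (Gk_inj k); [exact Hk1 | exact H1 | lra | now rewrite Gk_1].
Qed.

Lemma Hk_gt1 (k y : R) : 0 < k < 1 -> 0 < y -> 1 < Hk k y.
Proof.
  intros Hk1 Hy. destruct (Hk_spec k y Hk1 ltac:(lra)) as [H1 H2].
  destruct (Req_dec (Hk k y) 1) as [He|]; [rewrite He, Gk_1 in H2 | ]; lra.
Qed.

Lemma Hk_sub1_le (k y : R) : 0 < k < 1 -> 0 <= y -> (1 - k) ^ 2 * (Hk k y - 1) <= y ^ 2.
Proof.
  intros Hk1 Hy. destruct (Hk_spec k y Hk1 Hy) as [H1 H2].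
  pose proof (Gk_ge k _ Hk1 H1) as H. rewrite H2 in H.
  pose proof (sqrtm1_sqr _ H1). pose proof (sqrtm1_ge0 (Hk k y)).
  assert (Hsq : ((1 - k) * sqrtm1 (Hk k y)) ^ 2 <= y ^ 2) by (apply pow_incr; nra).
  assert (Hk k y - 1 <= sqrtm1 (Hk k y) ^ 2) by nra.
  assert (0 <= (1 - k) ^ 2) by nra. nra.
Qed.

Lemma Hk_dist_le (k k0 y y0 : R) : 0 < k < 1 -> 0 < k0 < 1 -> 0 <= y -> 0 <= y0 ->
  (1 - k) * Rabs (Hk k y - Hk k0 y0) <= Rabs (y - y0) + Rabs (k - k0) * arcosh (Hk k0 y0).
Proof.
  intros Hk1 Hk01 Hy Hy0.
  destruct (Hk_spec k y Hk1 Hy) as [H1 H2]. destruct (Hk_spec k0 y0 Hk01 Hy0) as [H3 H4].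
  pose proof (Gk_dist_ge k _ _ Hk1 H3 H1) as H.
  replace (Gk k (Hk k0 y0)) with (Gk k0 (Hk k0 y0) + (k0 - k) * arcosh (Hk k0 y0)) in H
    by (rewrite !Gk_eq; ring).
  rewrite H2, H4 in H. pose proof (arcosh_ge0 _ H3).
  eapply Rle_trans; [exact H|].
  replace (y - (y0 + (k0 - k) * arcosh (Hk k0 y0)))
    with ((y - y0) + (k - k0) * arcosh (Hk k0 y0)) by ring.
  eapply Rle_trans; [apply Rabs_triang|]. rewrite Rabs_mult, (Rabs_right (arcosh _)); lra.
Qed.

Lemma filterlim_Hk {T} (F : (T -> Prop) -> Prop) {FF : Filter F}
    (k y : T -> R) (k0 y0 : R) :
  0 < k0 < 1 -> 0 <= y0 -> F (fun s => 0 < k s < 1 /\ 0 <= y s) ->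
  filterlim k F (locally k0) -> filterlim y F (locally y0) ->
  filterlim (fun s => Hk (k s) (y s)) F (locally (Hk k0 y0)).
Proof.
  intros Hk01 Hy0 Hdom Hklim Hylim. apply (filterlim_locally_Rabs F). intros eps Heps.
  set (L := arcosh (Hk k0 y0)).
  assert (HL : 0 <= L) by (apply arcosh_ge0, Hk_spec; assumption).
  set (eta := Rmin ((1 - k0) / 2) (eps * (1 - k0) / (4 * (1 + L)))).
  assert (Heta : 0 < eta) by (apply Rmin_pos; [lra | apply Rdiv_lt_0_compat; nra]).
  assert (Heta1 : eta <= (1 - k0) / 2) by apply Rmin_l.
  assert (Heta2 : eta * (4 * (1 + L)) <= eps * (1 - k0)) by (apply Rle_div_r; [lra | apply Rmin_r]).
  generalize (filter_and _ _ Hdom (filter_and _ _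
    (proj1 (filterlim_locally_Rabs F k k0) Hklim eta Heta)
    (proj1 (filterlim_locally_Rabs F y y0) Hylim eta Heta))).
  apply filter_imp. intros s [[Hks Hys] [Hk_near Hy_near]].
  pose proof (Hk_dist_le (k s) k0 (y s) y0 Hks Hk01 Hys Hy0) as H. fold L in H.
  apply Rabs_def2 in Hk_near as Hk_near'.
  assert (Rabs (k s - k0) * L <= eta * L) by (apply Rmult_le_compat_r; lra).
  pose proof (Rabs_pos (Hk (k s) (y s) - Hk k0 y0)). nra.
Qed.

(* [dHk k x = 1 / G_k'(x)], the derivative of [H_k] at [G_k x]. *)
Definition dHk (k x : R) : R := sqrtm1 x / (x - k).

Lemma dHk_ge0 (k x : R) : k < 1 -> 1 <= x -> 0 <= dHk k x.
Proof. intros Hk1 Hx. apply Rdiv_le_0_compat; [apply sqrtm1_ge0 | lra]. Qed.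

Lemma is_derive_Hk (k y : R -> R) (s0 k' y' : R) :
  is_derive k s0 k' -> is_derive y s0 y' ->
  locally s0 (fun s => 0 < k s < 1 /\ 0 <= y s) -> 0 < y s0 ->
  is_derive (fun s => Hk (k s) (y s)) s0
    ((y' + k' * arcosh (Hk (k s0) (y s0))) * dHk (k s0) (Hk (k s0) (y s0))).
Proof.
  intros Dk Dy Hdom Hy0. destruct (locally_singleton _ _ Hdom) as [Hk0 _].
  set (X := fun s => Hk (k s) (y s)). set (X0 := X s0). set (L0 := arcosh X0).
  assert (HX0 : 1 < X0) by (apply Hk_gt1; assumption).
  pose proof (sqrtm1_gt0 X0 HX0).
  assert (HX : filterlim X (locally s0) (locally X0)).
  { apply (filterlim_Hk (locally s0) k y); [exact Hk0 | lra | exact Hdom | |].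
    - exact (is_derive_continuous k s0 k' Dk).
    - exact (is_derive_continuous y s0 y' Dy). }
  set (dS := X0 / sqrtm1 X0). set (dL := / sqrtm1 X0).
  set (sigma := fun s => slope sqrtm1 X0 dS (X s) - k s * slope arcosh X0 dL (X s)).
  replace ((y' + k' * arcosh (Hk (k s0) (y s0))) * dHk (k s0) (Hk (k s0) (y s0)))
    with ((y' + L0 * k') / (dS - k s0 * dL))
    by (unfold dHk, dS, dL, L0, X0, X in *; field; split; lra).
  apply (is_derive_of_factor X (fun s => y s + L0 * k s) sigma).
  - apply (is_derive_plus y (fun s => L0 * k s)); [exact Dy | now apply is_derive_scal].
  - apply (filterlim_minus_fun (locally s0)).
    + apply (filterlim_comp _ _ _ X _ _ (locally X0) _ HX), filterlim_slope.
      now apply is_derive_sqrtm1.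
    + apply (filterlim_mult_fun (locally s0)); [exact (is_derive_continuous k s0 k' Dk) |].
      apply (filterlim_comp _ _ _ X _ _ (locally X0) _ HX), filterlim_slope.
      now apply is_derive_arcosh.
  - unfold dS, dL. replace (X0 / sqrtm1 X0 - k s0 * / sqrtm1 X0)
      with ((X0 - k s0) / sqrtm1 X0) by (field; lra).
    apply Rgt_not_eq, Rdiv_lt_0_compat; lra.
  - revert Hdom. apply filter_imp. intros s [Hks Hys].
    destruct (Hk_spec (k s) (y s) Hks Hys) as [_ Hs].
    destruct (Hk_spec (k s0) (y s0) Hk0 ltac:(lra)) as [_ Hs0].
    rewrite <- Hs at 1. rewrite <- Hs0. fold (X s) X0. rewrite !Gk_eq.
    unfold sigma. rewrite Rmult_minus_distr_r, Rmult_assoc.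
    rewrite <- (slope_spec sqrtm1 X0 dS), <- (slope_spec arcosh X0 dL).
    unfold L0, X0, X. ring.
Qed.

Lemma kappa_arg_nonneg (m b l : R) : 0 < m -> 0 < l -> 0 <= 4 * b ^ 2 * l / m ^ 2.
Proof. intros Hm Hl. apply Rdiv_le_0_compat; [apply Rmult_le_pos | ]; nra. Qed.

Lemma kappa_root_ge1 (m b l : R) : 0 < m -> 0 < l -> 1 <= sqrt (1 + 4 * b ^ 2 * l / m ^ 2).
Proof.
  intros Hm Hl. pose proof (kappa_arg_nonneg m b l Hm Hl).
  rewrite <- sqrt_1 at 1. apply sqrt_le_1_alt. lra.
Qed.

Lemma kappa_bounds (m b l : R) : 0 < m -> 0 < l -> 0 < b -> 0 < kappa m b l < 1.
Proof.
  intros Hm Hl Hb. unfold kappa.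
  assert (H : 0 < 4 * b ^ 2 * l / m ^ 2)
    by (apply Rdiv_lt_0_compat; [apply Rmult_lt_0_compat | ]; nra).
  assert (H1 : 1 < sqrt (1 + 4 * b ^ 2 * l / m ^ 2)).
  { rewrite <- sqrt_1 at 1. apply sqrt_lt_1_alt. lra. }
  set (w := sqrt (1 + 4 * b ^ 2 * l / m ^ 2)) in *.
  split; [apply Rinv_0_lt_compat; lra|].
  rewrite <- Rinv_1. apply Rinv_lt_contravar; lra.
Qed.

Lemma pp_pos (m b l : R) : 0 < m -> 0 < l -> 0 < b -> 0 < pp m b l.
Proof.
  intros Hm Hl Hb. destruct (kappa_bounds m b l Hm Hl Hb).
  apply Rdiv_lt_0_compat; [exact Hm | apply Rmult_lt_0_compat; nra].
Qed.

Lemma ex_derive_kappa (m l b : R) : 0 < m -> 0 < l -> ex_derive (fun b => kappa m b l) b.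
Proof.
  intros Hm Hl. unfold kappa.
  pose proof (kappa_arg_nonneg m b l Hm Hl).
  assert (Hs : 0 < sqrt (1 + 4 * b ^ 2 * l / m ^ 2)) by (apply sqrt_lt_R0; lra).
  auto_derive.
  replace (1 + 4 * (b * (b * 1)) * l * / (m * (m * 1))) with (1 + 4 * b ^ 2 * l / m ^ 2)
    by (field; lra).
  split; [lra | split; [lra | exact I]].
Qed.

Lemma ex_derive_pp (m l b : R) : 0 < m -> 0 < l -> 0 < b -> ex_derive (fun b => pp m b l) b.
Proof.
  intros Hm Hl Hb. destruct (kappa_bounds m b l Hm Hl Hb).
  destruct (ex_derive_kappa m l b Hm Hl) as [dk Hdk].
  eexists. apply (is_derive_div (fun _ => m) (fun b => 2 * b ^ 2 * kappa m b l)).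
  - apply is_derive_const.
  - apply (is_derive_Rmult (fun b => 2 * b ^ 2)); [|exact Hdk].
    auto_derive; [exact I | reflexivity].
  - apply Rgt_not_eq, Rmult_lt_0_compat; nra.
Qed.

(* [R] at [theta = 0], i.e. [p (1 - kappa)] (lemma [r0_eq]), in a form that is easy
   to differentiate in [b]. *)
Definition r0 (m l b : R) : R := 2 * l / (m * (1 + sqrt (1 + 4 * b ^ 2 * l / m ^ 2))).

Definition rho (m l b : R) : R := atan (r0 m l b).

Lemma r0_pos (m l b : R) : 0 < m -> 0 < l -> 0 < r0 m l b.
Proof.
  intros Hm Hl. unfold r0. pose proof (kappa_root_ge1 m b l Hm Hl).
  apply Rdiv_lt_0_compat; nra.
Qed.

Lemma r0_eq (m l b : R) : 0 < m -> 0 < l -> 0 < b -> pp m b l * (1 - kappa m b l) = r0 m l b.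
Proof.
  intros Hm Hl Hb. unfold pp, kappa, r0.
  pose proof (kappa_arg_nonneg m b l Hm Hl) as Hq.
  set (w := sqrt (1 + 4 * b ^ 2 * l / m ^ 2)).
  assert (Hw2 : w ^ 2 = 1 + 4 * b ^ 2 * l / m ^ 2) by (apply pow2_sqrt; lra).
  pose proof (kappa_root_ge1 m b l Hm Hl) as Hw1. fold w in Hw1.
  replace (2 * l) with (m ^ 2 * (w ^ 2 - 1) / (2 * b ^ 2)) by (rewrite Hw2; field; lra).
  field. repeat split; nra.
Qed.

Lemma rho_nonneg (m l b : R) : 0 < m -> 0 < l -> 0 <= rho m l b.
Proof.
  intros Hm Hl. unfold rho. rewrite <- atan_0.
  apply Rlt_le, atan_increasing, r0_pos; assumption.
Qed.

Lemma is_derive_rho_bound (m l b : R) : 0 < m -> 0 < l -> 0 <= b ->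
  exists d, is_derive (rho m l) b d /\ Rabs d <= 2 * b / m.
Proof.
  intros Hm Hl Hb.
  pose proof (kappa_arg_nonneg m b l Hm Hl) as Hq.
  set (w := sqrt (1 + 4 * b ^ 2 * l / m ^ 2)).
  pose proof (kappa_root_ge1 m b l Hm Hl) as Hw1. fold w in Hw1.
  exists (- (8 * b * l ^ 2 / (m * w * (m ^ 2 * (1 + w) ^ 2 + 4 * l ^ 2)))). split.
  - unfold rho, r0. auto_derive.
    + replace (1 + 4 * (b * (b * 1)) * l * / (m * (m * 1))) with (1 + 4 * b ^ 2 * l / m ^ 2)
        by (field; lra).
      fold w. repeat split; try lra. apply Rgt_not_eq. nra.
    + replace (1 + 4 * (b * (b * 1)) * l * / (m * (m * 1))) with (1 + 4 * b ^ 2 * l / m ^ 2)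
        by (field; lra).
      fold w. unfold Rsqr. field. repeat split; nra.
  - assert (HD : 0 < m * w * (m ^ 2 * (1 + w) ^ 2 + 4 * l ^ 2))
      by (apply Rmult_lt_0_compat; nra).
    rewrite Rabs_Ropp, Rabs_right by (apply Rle_ge, Rdiv_le_0_compat; nra).
    replace (2 * b / m)
      with (2 * b * w * (m ^ 2 * (1 + w) ^ 2 + 4 * l ^ 2)
            / (m * w * (m ^ 2 * (1 + w) ^ 2 + 4 * l ^ 2)))
      by (field; nra).
    assert (4 * l ^ 2 <= w * (m ^ 2 * (1 + w) ^ 2 + 4 * l ^ 2)) by nra.
    unfold Rdiv. apply Rmult_le_compat_r; [left; apply Rinv_0_lt_compat; lra | nra].
Qed.

Lemma angle_mul_jap_le (m l b : R) : 0 < m -> 0 < l -> 0 <= b ->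
  (PI / 2 - rho m l b) * jap l <= 2 * m + 4 + 2 * (b * sqrt (jap l)).
Proof.
  intros Hm Hl Hb. unfold jap.
  set (J := sqrt (2 + l ^ 2)). set (sJ := sqrt J).
  assert (HJ2 : J ^ 2 = 2 + l ^ 2) by (apply pow2_sqrt; nra).
  assert (HJ : 0 <= J) by apply sqrt_pos.
  assert (HsJ2 : sJ ^ 2 = J) by (apply pow2_sqrt; lra).
  assert (HsJ : 0 <= sJ) by apply sqrt_pos.
  pose proof (rho_nonneg m l b Hm Hl). pose proof PI_4.
  assert (Hrho : rho m l b < PI / 2) by apply atan_bound.
  destruct (Rle_lt_dec l 1) as [Hl1|Hl1].
  - assert (J <= 2) by nra. nra.
  - pose proof (PI2_minus_atan_le_inv (r0 m l b) (r0_pos m l b Hm Hl)) as Hatan.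
    fold (rho m l b) in Hatan.
    pose proof (kappa_root_ge1 m b l Hm Hl) as Hw1.
    pose proof (kappa_arg_nonneg m b l Hm Hl).
    unfold r0 in Hatan. set (w := sqrt (1 + 4 * b ^ 2 * l / m ^ 2)) in *.
    assert (Hw2 : w ^ 2 = 1 + 4 * b ^ 2 * l / m ^ 2) by (apply pow2_sqrt; lra).
    rewrite Rinv_div in Hatan.
    assert (HJl : J <= 2 * l) by nra.
    assert (Hw : w <= 1 + 2 * b * sJ / m).
    { apply Rsqr_incr_0_var; [| assert (0 <= 2 * b * sJ / m) by (apply Rdiv_le_0_compat; nra); lra].
      unfold Rsqr. replace ((1 + 2 * b * sJ / m) * (1 + 2 * b * sJ / m))
        with (1 + 4 * b * sJ / m + 4 * b ^ 2 * sJ ^ 2 / m ^ 2) by (field; lra).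
      rewrite HsJ2. replace (w * w) with (w ^ 2) by ring. rewrite Hw2.
      assert (0 <= 4 * b * sJ / m) by (apply Rdiv_le_0_compat; nra).
      assert (4 * b ^ 2 * l / m ^ 2 <= 4 * b ^ 2 * J / m ^ 2).
      { unfold Rdiv. apply Rmult_le_compat_r; [apply Rlt_le, Rinv_0_lt_compat; nra | nra]. }
      lra. }
    apply (Rle_trans _ (m * (1 + w))).
    + apply (Rle_trans _ (m * (1 + w) / (2 * l) * J)); [apply Rmult_le_compat_r; lra|].
      replace (m * (1 + w) / (2 * l) * J) with (m * (1 + w) * (J / (2 * l))) by (field; lra).
      rewrite <- (Rmult_1_r (m * (1 + w))) at 2.
      apply Rmult_le_compat_l; [nra|]. apply Rle_div_l; lra.
    + replace (2 * m + 4 + 2 * (b * sJ)) with (m * (2 + 2 * b * sJ / m) + 4) by (field; lra).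
      nra.
Qed.

Lemma continuous_kappa (m l b : R) : 0 < m -> 0 < l -> continuous (fun b => kappa m b l) b.
Proof.
  intros Hm Hl. destruct (ex_derive_kappa m l b Hm Hl) as [d Hd].
  exact (is_derive_continuous _ b d Hd).
Qed.

Lemma continuous_pp (m l b : R) : 0 < m -> 0 < l -> 0 < b -> continuous (fun b => pp m b l) b.
Proof.
  intros Hm Hl Hb. destruct (ex_derive_pp m l b Hm Hl Hb) as [d Hd].
  exact (is_derive_continuous _ b d Hd).
Qed.

Lemma Rfun_ge_r0 (m th b l : R) : 0 < m -> 0 < l -> 0 < b -> r0 m l b <= Rfun m th b l.
Proof.
  intros Hm Hl Hb. rewrite <- r0_eq by assumption. unfold Rfun.
  pose proof (pp_pos m b l Hm Hl Hb).
  destruct (Hk_spec (kappa m b l) (Rabs th / pp m b l)) as [H1 _].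
  - now apply kappa_bounds.
  - apply Rdiv_le_0_compat; [apply Rabs_pos | lra].
  - nra.
Qed.

Lemma Rfun_0 (m b l : R) : 0 < m -> 0 < l -> 0 < b -> Rfun m 0 b l = r0 m l b.
Proof.
  intros Hm Hl Hb. rewrite <- r0_eq by assumption. unfold Rfun.
  rewrite Rabs_R0, Rdiv_0_l, Hk_0 by now apply kappa_bounds. ring.
Qed.

Lemma filterlim_Rfun {T} (F : (T -> Prop) -> Prop) {FF : Filter F}
    (m l : R) (u b : T -> R) (u0 b0 : R) :
  0 < m -> 0 < l -> 0 < b0 -> filterlim u F (locally u0) -> filterlim b F (locally b0) ->
  filterlim (fun s => Rfun m (u s) (b s) l) F (locally (Rfun m u0 b0 l)).
Proof.
  intros Hm Hl Hb0 Hu Hb.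
  assert (HK := filterlim_continuous_comp F b _ b0 Hb (continuous_kappa m l b0 Hm Hl)).
  assert (HP := filterlim_continuous_comp F b _ b0 Hb (continuous_pp m l b0 Hm Hl Hb0)).
  pose proof (pp_pos m b0 l Hm Hl Hb0).
  assert (HY : filterlim (fun s => Rabs (u s) / pp m (b s) l) F
                 (locally (Rabs u0 / pp m b0 l))).
  { apply (filterlim_mult_fun F).
    - exact (filterlim_continuous_comp F u Rabs u0 Hu (continuous_Rabs u0)).
    - apply (filterlim_inv_fun F); [exact HP | lra]. }
  assert (HX := filterlim_Hk F (fun s => kappa m (b s) l) (fun s => Rabs (u s) / pp m (b s) l)
     (kappa m b0 l) (Rabs u0 / pp m b0 l)).
  unfold Rfun. apply (filterlim_minus_fun F); apply (filterlim_mult_fun F); try assumption.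
  apply HX; [now apply kappa_bounds | | | exact HK | exact HY].
  { apply Rdiv_le_0_compat; [apply Rabs_pos | lra]. }
  apply (filter_imp (fun s => 0 < b s)), (filterlim_gt F b b0 0 Hb Hb0).
  intros s Hs. split; [now apply kappa_bounds|].
  apply Rdiv_le_0_compat; [apply Rabs_pos | now apply pp_pos].
Qed.

Definition Rfun_dth (m l th b : R) : R :=
  sign th * dHk (kappa m b l) (Hk (kappa m b l) (Rabs th / pp m b l)).

Definition Rfun_da (m l th b : R) : R :=
  let k := kappa m b l in
  let p := pp m b l in
  let dk := Derive (fun b => kappa m b l) b in
  let dp := Derive (fun b => pp m b l) b in
  let x := Hk k (Rabs th / p) in
  dp * x + p * ((- Rabs th * dp / p ^ 2 + dk * arcosh x) * dHk k x) - dp * k - p * dk.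

Lemma is_derive_Hk_zero (k y w : R -> R) (s0 w' : R) :
  locally s0 (fun s => 0 < k s < 1 /\ 0 <= y s /\ y s <= (1 - k s) * Rabs (w s)) ->
  w s0 = 0 -> is_derive w s0 w' -> is_derive (fun s => Hk (k s) (y s)) s0 0.
Proof.
  intros Hdom Hw0 Dw. destruct (locally_singleton _ _ Hdom) as [Hk0 [Hy0 Hy0']].
  rewrite Hw0, Rabs_R0, Rmult_0_r in Hy0'.
  assert (Hys0 : y s0 = 0) by lra.
  apply (is_derive_0_of_dominated _ (fun s => w s ^ 2)).
  - replace 0 with (INR 2 * w' * w s0 ^ Nat.pred 2) by (rewrite Hw0; simpl; ring).
    now apply is_derive_pow.
  - revert Hdom. apply filter_imp. intros s [Hks [Hys Hyw]].
    rewrite Hys0, Hk_0, Hw0 by exact Hk0.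
    destruct (Hk_spec (k s) (y s) Hks Hys) as [H1 _].
    pose proof (Hk_sub1_le (k s) (y s) Hks Hys) as Hsub.
    assert (Hy2 : y s ^ 2 <= (1 - k s) ^ 2 * w s ^ 2).
    { rewrite <- (pow2_abs (w s)), <- Rpow_mult_distr. now apply pow_incr. }
    assert (Hk2 : 0 < (1 - k s) ^ 2) by nra.
    assert (Hk_sub : Hk (k s) (y s) - 1 <= w s ^ 2).
    { apply (Rmult_le_reg_l ((1 - k s) ^ 2)); lra. }
    rewrite pow_i, Rminus_0_r, !Rabs_right by (lia || nra). exact Hk_sub.
Qed.

Lemma is_derive_Hk_Rabs_div (k p u : R -> R) (s0 k' p' u' : R) :
  is_derive k s0 k' -> is_derive p s0 p' -> is_derive u s0 u' ->
  locally s0 (fun s => 0 < k s < 1 /\ 0 < p s) ->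
  let x0 := Hk (k s0) (Rabs (u s0) / p s0) in
  is_derive (fun s => Hk (k s) (Rabs (u s) / p s)) s0
    (((sign (u s0) * u' * p s0 - Rabs (u s0) * p') / p s0 ^ 2 + k' * arcosh x0)
       * dHk (k s0) x0).
Proof.
  intros Dk Dp Du Hdom x0. destruct (locally_singleton _ _ Hdom) as [Hk0 Hp0].
  assert (Hdom' : locally s0 (fun s => 0 < k s < 1 /\ 0 <= Rabs (u s) / p s)).
  { revert Hdom. apply filter_imp. intros s [Hks Hps].
    split; [exact Hks | apply Rdiv_le_0_compat; [apply Rabs_pos | exact Hps]]. }
  destruct (Req_dec (u s0) 0) as [Hu0|Hu0].
  - replace (_ * dHk (k s0) x0) with 0.
    2:{ unfold x0. rewrite Hu0, Rabs_R0, Rdiv_0_l, Hk_0 by exact Hk0.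
        unfold dHk. rewrite sqrtm1_1. unfold Rdiv. ring. }
    eapply (is_derive_Hk_zero k _ (fun s => u s / (p s * (1 - k s))) s0);
      [| now rewrite Hu0, Rdiv_0_l |].
    + revert Hdom. apply filter_imp. intros s [Hks Hps].
      assert (Hpk : 0 < p s * (1 - k s)) by nra.
      split; [exact Hks|]. split; [apply Rdiv_le_0_compat; [apply Rabs_pos | exact Hps]|].
      right. rewrite Rabs_div by lra. rewrite (Rabs_right (p s * (1 - k s))) by lra.
      field. split; lra.
    + apply (is_derive_div u (fun s => p s * (1 - k s))); [exact Du | | nra].
      apply is_derive_Rmult; [exact Dp|].
      apply (is_derive_minus (fun _ => 1) k); [apply is_derive_const | exact Dk].
  - apply (is_derive_Hk k (fun s => Rabs (u s) / p s) s0 k' _ Dk); [| exact Hdom' |].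
    + apply (is_derive_div (fun s => Rabs (u s)) p); [| exact Dp | lra].
      now apply is_derive_Rabs.
    + apply Rdiv_lt_0_compat; [now apply Rabs_pos_lt | exact Hp0].
Qed.

Lemma is_derive_Rfun_comp (m l : R) (u b : R -> R) (s0 u' b' : R) :
  0 < m -> 0 < l -> is_derive u s0 u' -> is_derive b s0 b' -> 0 < b s0 ->
  is_derive (fun s => Rfun m (u s) (b s) l) s0
    (Rfun_dth m l (u s0) (b s0) * u' + Rfun_da m l (u s0) (b s0) * b').
Proof.
  intros Hm Hl Du Db Hb0.
  set (K := fun s => kappa m (b s) l). set (P := fun s => pp m (b s) l).
  set (X := fun s => Hk (K s) (Rabs (u s) / P s)).
  set (dk := Derive (fun b => kappa m b l) (b s0)).
  set (dp := Derive (fun b => pp m b l) (b s0)).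
  assert (DK : is_derive K s0 (b' * dk)).
  { apply (is_derive_comp (fun b => kappa m b l) b); [|exact Db].
    now apply Derive_correct, ex_derive_kappa. }
  assert (DP : is_derive P s0 (b' * dp)).
  { apply (is_derive_comp (fun b => pp m b l) b); [|exact Db].
    now apply Derive_correct, ex_derive_pp. }
  assert (Hdom : locally s0 (fun s => 0 < K s < 1 /\ 0 < P s)).
  { apply (filter_imp (fun s => 0 < b s)).
    - intros s Hs. split; [now apply kappa_bounds | now apply pp_pos].
    - exact (filterlim_gt _ b (b s0) 0 (is_derive_continuous b s0 b' Db) Hb0). }
  pose proof (is_derive_Hk_Rabs_div K P u s0 _ _ _ DK DP Du Hdom) as DX. cbv zeta in DX.
  apply (is_derive_ext (fun s => P s * X s - P s * K s)); [reflexivity|].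
  match type of DX with is_derive _ _ ?X' =>
    replace (Rfun_dth m l (u s0) (b s0) * u' + Rfun_da m l (u s0) (b s0) * b')
      with (b' * dp * X s0 + P s0 * X' - (b' * dp * K s0 + P s0 * (b' * dk))) end.
  - apply (is_derive_minus (fun s => P s * X s) (fun s => P s * K s));
      apply is_derive_Rmult; assumption.
  - assert (HP0 : 0 < P s0) by now apply pp_pos.
    unfold Rfun_dth, Rfun_da. cbv zeta. fold dk dp. unfold X, K, P in *. field. lra.
Qed.

Lemma Rabs_Rfun_dth (m l th b : R) : 0 < m -> 0 < l -> 0 < b ->
  Rabs (Rfun_dth m l th b) = sign th * Rfun_dth m l th b.
Proof.
  intros Hm Hl Hb. pose proof (kappa_bounds m b l Hm Hl Hb) as Hk.
  unfold Rfun_dth. rewrite Rabs_mult, Rabs_sign, Rabs_right; [ring|].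
  apply Rle_ge, dHk_ge0; [lra|]. apply Hk_spec; [exact Hk|].
  apply Rdiv_le_0_compat; [apply Rabs_pos | now apply pp_pos].
Qed.

Lemma dth_Rt_eq (m t l th a : R) : 0 < m -> 0 < l -> 0 < a ->
  dth_Rt m t l th a = Rfun_dth m l (th + a * t) a.
Proof.
  intros Hm Hl Ha. apply is_derive_unique. unfold Rt.
  replace (Rfun_dth m l (th + a * t) a)
    with (Rfun_dth m l (th + a * t) a * 1 + Rfun_da m l (th + a * t) a * 0) by ring.
  apply (is_derive_Rfun_comp m l (fun s => s + a * t) (fun _ => a)); try assumption.
  - auto_derive; [exact I | ring].
  - apply (is_derive_const (K := R_AbsRing) (V := R_NormedModule)).
Qed.

Lemma da_Rt_eq (m t l th a : R) : 0 < m -> 0 < l -> 0 < a ->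
  da_Rt m t l th a = Rfun_dth m l (th + a * t) a * t + Rfun_da m l (th + a * t) a.
Proof.
  intros Hm Hl Ha. apply is_derive_unique. unfold Rt.
  replace (Rfun_dth m l (th + a * t) a * t + Rfun_da m l (th + a * t) a)
    with (Rfun_dth m l (th + a * t) a * t + Rfun_da m l (th + a * t) a * 1) by ring.
  apply (is_derive_Rfun_comp m l (fun s => th + s * t) (fun s => s)); try assumption.
  - auto_derive; [exact I | ring].
  - apply (is_derive_id (K := R_AbsRing)).
Qed.

Lemma lyapunov_rate_nonneg (m lam K a f A I g dr : R) :
  0 < m -> 0 < lam -> 0 <= K -> 4 * lam * K <= m -> 0 <= a -> 0 <= g ->
  Rabs f <= K * g -> Rabs A <= I -> Rabs dr <= 2 * a / m ->
  0 <= 2 * a * (lam * f * A) + 4 * lam * K * (I * a * g - lam * f * I * dr).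
Proof.
  intros Hm Hlam HK HKm Ha Hg Hf HA Hdr.
  assert (HI : 0 <= I) by (pose proof (Rabs_pos A); lra).
  assert (H1 : - (K * g * I) <= f * A).
  { assert (Rabs (f * A) <= K * g * I)
      by (rewrite Rabs_mult; apply Rmult_le_compat; auto using Rabs_pos).
    apply Rabs_le_between in H. lra. }
  assert (H2 : f * dr <= K * g * (2 * a / m)).
  { assert (Rabs (f * dr) <= K * g * (2 * a / m))
      by (rewrite Rabs_mult; apply Rmult_le_compat; auto using Rabs_pos).
    apply Rabs_le_between in H. lra. }
  assert (H3 : 2 * lam * K / m <= 1 / 2) by (apply Rle_div_l; lra).
  assert (H4 : K * g * (2 * a / m) = a * g * (2 * K / m)) by (field; lra).
  assert (0 <= a * g * I) by (apply Rmult_le_pos; nra).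
  assert (H5 : lam * (f * dr) <= a * g * (2 * lam * K / m)).
  { replace (a * g * (2 * lam * K / m)) with (lam * (a * g * (2 * K / m))) by (field; lra).
    apply Rmult_le_compat_l; lra. }
  assert (T1 : 2 * a * lam * (- (K * g * I)) <= 2 * a * lam * (f * A))
    by (apply Rmult_le_compat_l; nra).
  assert (T3 : 4 * lam * K * I * (lam * (f * dr)) <= 4 * lam * K * I * (a * g * (1 / 2))).
  { apply Rmult_le_compat_l; [apply Rmult_le_pos; nra|].
    apply (Rle_trans _ _ _ H5). apply Rmult_le_compat_l; [nra | lra]. }
  nra.
Qed.

Section Flow.

Variables (m lam K T l : R) (F : R -> R -> R) (th a : R -> R).

Hypothesis Hm : 0 < m.
Hypothesis Hlam : 0 < lam.
Hypothesis HK : 0 <= K.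
Hypothesis HKm : 4 * lam * K <= m.
Hypothesis Hl : 0 < l.
Hypothesis F_bound : forall t r, 0 <= t <= T -> 0 < r ->
  Rabs (F t r) <= K / (1 + r ^ 2 + t ^ 2).
Hypothesis th_cont : cont_on_interval T th.
Hypothesis a_cont : cont_on_interval T a.
Hypothesis a_pos : forall t, 0 <= t <= T -> 0 < a t.
Hypothesis th_deriv : forall t, 0 < t < T ->
  is_derive th t (- lam * F t (Rt m t l (th t) (a t)) * da_Rt m t l (th t) (a t)).
Hypothesis a_deriv : forall t, 0 < t < T ->
  is_derive a t (lam * F t (Rt m t l (th t) (a t)) * dth_Rt m t l (th t) (a t)).

Definition phase (s : R) : R := th s + a s * s.

Definition radius (s : R) : R := Rfun m (phase s) (a s) l.

Definition angle (s : R) : R := sign (phase s) * (atan (radius s) - rho m l (a s)).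

Definition lyapunov (s : R) : R := a s ^ 2 + 4 * lam * K * angle s.

Lemma r0_le_radius (s : R) : 0 <= s <= T -> r0 m l (a s) <= radius s.
Proof. intros Hs. apply Rfun_ge_r0; auto. Qed.

Lemma radius_pos (s : R) : 0 <= s <= T -> 0 < radius s.
Proof.
  intros Hs. apply (Rlt_le_trans _ _ _ (r0_pos m l (a s) Hm Hl)), r0_le_radius, Hs.
Qed.

Lemma Rabs_angle_le (s : R) : 0 <= s <= T -> Rabs (angle s) <= PI / 2 - rho m l (a s).
Proof.
  intros Hs. pose proof (r0_le_radius s Hs) as Hr.
  assert (H0 : 0 <= atan (radius s) - rho m l (a s)).
  { unfold rho. destruct (Rle_lt_or_eq_dec _ _ Hr) as [Hlt|Heq].
    - pose proof (atan_increasing _ _ Hlt). lra.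
    - rewrite Heq. lra. }
  pose proof (atan_bound (radius s)).
  eapply Rle_trans; [apply Rabs_sign_mul_le|]. rewrite Rabs_right; lra.
Qed.

Lemma angle_gap_phase_0 (s : R) : 0 <= s <= T -> phase s = 0 ->
  atan (radius s) - rho m l (a s) = 0.
Proof.
  intros Hs Hu. unfold radius, rho. rewrite Hu, Rfun_0 by auto. ring.
Qed.

Lemma is_derive_a (t : R) : 0 < t < T ->
  is_derive a t (lam * F t (radius t) * Rfun_dth m l (phase t) (a t)).
Proof.
  intros Ht. pose proof (a_deriv t Ht) as H.
  rewrite dth_Rt_eq in H by (auto; apply a_pos; lra). exact H.
Qed.

Lemma is_derive_phase (t : R) : 0 < t < T ->
  is_derive phase t (- lam * F t (radius t) *
    (Rfun_dth m l (phase t) (a t) * t + Rfun_da m l (phase t) (a t))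
    + (lam * F t (radius t) * Rfun_dth m l (phase t) (a t) * t + a t * 1)).
Proof.
  intros Ht. apply (is_derive_plus th (fun s => a s * s)).
  - pose proof (th_deriv t Ht) as H.
    rewrite da_Rt_eq in H by (auto; apply a_pos; lra). exact H.
  - apply is_derive_Rmult; [now apply is_derive_a | apply (is_derive_id (K := R_AbsRing))].
Qed.

(* The flow is Hamiltonian, so the [a]-derivative [Rfun_da] of [R] cancels. *)
Lemma is_derive_radius (t : R) : 0 < t < T ->
  is_derive radius t (a t * Rfun_dth m l (phase t) (a t)).
Proof.
  intros Ht. assert (Hat : 0 < a t) by (apply a_pos; lra).
  set (A := Rfun_dth m l (phase t) (a t)). set (B := Rfun_da m l (phase t) (a t)).
  set (f := F t (radius t)).
  replace (a t * A)
    with (A * (- lam * f * (A * t + B) + (lam * f * A * t + a t * 1)) + B * (lam * f * A))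
    by ring.
  exact (is_derive_Rfun_comp m l phase a t _ _ Hm Hl (is_derive_phase t Ht)
           (is_derive_a t Ht) Hat).
Qed.

Lemma Rabs_F_radius_le (t : R) : 0 <= t <= T ->
  Rabs (F t (radius t)) <= K * / (1 + (radius t)²).
Proof.
  intros Ht. apply (Rle_trans _ _ _ (F_bound t (radius t) Ht (radius_pos t Ht))).
  pose proof (Rle_0_sqr (radius t)). unfold Rsqr in *.
  apply Rmult_le_compat_l; [exact HK|]. apply Rinv_le_contravar; nra.
Qed.

Lemma lyapunov_derive_nonneg (t : R) : 0 < t < T ->
  exists d, 0 <= d /\ is_derive lyapunov t d.
Proof.
  intros Ht. assert (Ht' : 0 <= t <= T) by lra. assert (Hat : 0 < a t) by (apply a_pos; lra).
  set (A := Rfun_dth m l (phase t) (a t)). set (f := F t (radius t)).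
  set (g := / (1 + (radius t)²)).
  set (sg := sign (phase t)).
  destruct (is_derive_rho_bound m l (a t) Hm Hl ltac:(lra)) as [dr [Drho Hdr]].
  assert (DD : is_derive (fun s => atan (radius s) - rho m l (a s)) t
                 (a t * A * g - lam * f * A * dr)).
  { apply (is_derive_minus (fun s => atan (radius s)) (fun s => rho m l (a s))).
    - apply (is_derive_comp atan radius); [apply is_derive_atan | now apply is_derive_radius].
    - replace (lam * f * A * dr) with (scal (lam * f * A) dr) by reflexivity.
      apply (is_derive_comp (rho m l) a); [exact Drho | now apply is_derive_a]. }
  assert (DQ : is_derive angle t (sg * (a t * A * g - lam * f * A * dr))).
  { apply is_derive_sign_mul; [| exact DD |].
    { exact (is_derive_continuous _ t _ (is_derive_phase t Ht)). }
    intros Hu0. split; [now apply angle_gap_phase_0|].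
    unfold A, Rfun_dth. rewrite Hu0, sign_0. ring. }
  exists (INR 2 * (lam * f * A) * a t ^ Nat.pred 2
          + 4 * lam * K * (sg * (a t * A * g - lam * f * A * dr))).
  split.
  - assert (Hg : 0 <= g).
    { apply Rlt_le, Rinv_0_lt_compat. pose proof (Rle_0_sqr (radius t)). lra. }
    assert (HA : Rabs A <= sg * A) by (right; now apply Rabs_Rfun_dth).
    eapply Rle_trans; [exact (lyapunov_rate_nonneg m lam K (a t) f A (sg * A) g dr
                                Hm Hlam HK HKm ltac:(lra) Hg (Rabs_F_radius_le t Ht') HA Hdr) |].
    right. simpl. ring.
  - apply (is_derive_plus (fun s => a s ^ 2) (fun s => 4 * lam * K * angle s)).
    + apply is_derive_pow. now apply is_derive_a.
    + now apply is_derive_scal.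
Qed.

Lemma lyapunov_continuous_within (t : R) : 0 <= t <= T ->
  filterlim lyapunov (within (fun s => 0 <= s <= T) (locally t)) (locally (lyapunov t)).
Proof.
  intros Ht. set (W := within (fun s => 0 <= s <= T) (locally t)).
  assert (Hat : 0 < a t) by now apply a_pos.
  assert (Ha : filterlim a W (locally (a t))) by now apply a_cont.
  assert (Hu : filterlim phase W (locally (phase t))).
  { apply (filterlim_plus_fun W); [now apply th_cont|].
    apply (filterlim_mult_fun W); [exact Ha|].
    exact (filterlim_filter_le_1 _ (filter_le_within _) (filterlim_id _ (locally t))). }
  assert (Hr : filterlim radius W (locally (radius t)))
    by (apply (filterlim_Rfun W); assumption).
  assert (Hrho : continuous (rho m l) (a t)).
  { destruct (is_derive_rho_bound m l (a t) Hm Hl ltac:(lra)) as [d [Hd _]].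
    exact (is_derive_continuous _ _ _ Hd). }
  apply (filterlim_plus_fun W).
  - apply (filterlim_continuous_comp W a (fun x => x ^ 2) _ Ha).
    apply (is_derive_continuous _ (a t) (2 * a t)). auto_derive; [exact I | ring].
  - apply (filterlim_mult_fun W); [apply filterlim_const|].
    apply (filterlim_sign_mul W); [exact Hu | | now apply angle_gap_phase_0].
    apply (filterlim_minus_fun W).
    + apply (filterlim_continuous_comp W radius atan _ Hr).
      exact (is_derive_continuous _ _ _ (is_derive_atan _)).
    + exact (filterlim_continuous_comp W a (rho m l) _ Ha Hrho).
Qed.

Lemma a_sqr_lower (t : R) : 0 <= t <= T ->
  a 0 ^ 2 - 4 * lam * K * ((PI / 2 - rho m l (a t)) + (PI / 2 - rho m l (a 0))) <= a t ^ 2.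
Proof.
  intros Ht.
  assert (HE : lyapunov 0 <= lyapunov t).
  { apply (nondecreasing_of_derive_nonneg lyapunov 0 T); [| | exact Ht].
    - exact lyapunov_derive_nonneg.
    - exact lyapunov_continuous_within. }
  unfold lyapunov in HE.
  pose proof (Rabs_angle_le t Ht) as H1. pose proof (Rabs_angle_le 0 ltac:(lra)) as H0.
  apply Rabs_le_between in H1. apply Rabs_le_between in H0.
  assert (0 <= 4 * lam * K) by nra. nra.
Qed.

End Flow.

Lemma half_le_of_sqr_lower (X X0 d Mc m : R) :
  0 < m -> 0 <= Mc -> 0 < d < 1 -> 8 * Mc * (4 * m + 11) <= d ^ 2 -> 0 <= X -> d <= X0 ->
  X0 ^ 2 - Mc * (4 * m + 8 + 2 * X + 2 * X0) <= X ^ 2 -> d / 2 <= X.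
Proof.
  intros Hm HMc Hd Hsmall HX HX0 Hsq. apply Rnot_lt_le. intros Hlt.
  assert (HMd : Mc <= d / 2) by nra.
  assert (H1 : 0 <= (X0 - d) * (X0 + d - 2 * Mc)) by nra.
  assert (H2 : X ^ 2 + 2 * Mc * X < d ^ 2 / 4 + Mc * d) by nra.
  assert (H3 : Mc * (4 * m + 8 + 3 * d) <= Mc * (4 * m + 11)) by nra.
  nra.
Qed.

Lemma sqr_le_of_le_inv_sqrt (N x e : R) : 0 < N -> 0 <= e -> e <= / sqrt N * x ->
  e ^ 2 <= x ^ 2 / N.
Proof.
  intros HN He Hex. pose proof (sqrt_lt_R0 N HN).
  replace (x ^ 2 / N) with ((/ sqrt N * x) ^ 2)
    by (rewrite Rpow_mult_distr, pow_inv, pow2_sqrt; [field |]; lra).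
  apply pow_incr. lra.
Qed.

Lemma smallness_of_eps (m lam C N eps delta : R) :
  0 < m -> 0 < lam -> 0 < C -> 4 * lam * C / m <= N -> 32 * lam * C * (4 * m + 11) <= N ->
  0 < delta < 1 -> 0 <= eps -> eps <= / sqrt N * delta ^ 2 ->
  4 * lam * (C * eps ^ 2) <= m /\ 8 * (4 * lam * (C * eps ^ 2)) * (4 * m + 11) <= delta ^ 2.
Proof.
  intros Hm Hlam HC HN1 HN2 Hd He Hed.
  assert (HN : 0 < N).
  { assert (0 < lam * C * (4 * m + 11)) by (apply Rmult_lt_0_compat; nra). lra. }
  assert (Hd2 : 0 < delta ^ 2 <= 1) by (split; nra).
  assert (Hd4 : (delta ^ 2) ^ 2 <= delta ^ 2)
    by (replace ((delta ^ 2) ^ 2) with (delta ^ 2 * delta ^ 2) by ring; nra).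
  assert (HNe : N * eps ^ 2 <= delta ^ 2).
  { pose proof (sqr_le_of_le_inv_sqrt N (delta ^ 2) eps HN He Hed) as H.
    apply Rle_div_r in H; lra. }
  apply Rle_div_l in HN1; [|lra].
  split; nra.
Qed.

Lemma half_delta_le (m l Mc delta b b0 : R) :
  0 < m -> 0 < l -> 0 <= Mc -> 0 < delta < 1 -> 8 * Mc * (4 * m + 11) <= delta ^ 2 ->
  0 < b -> 0 < b0 -> b0 * sqrt (jap l) >= delta ->
  b0 ^ 2 - Mc * ((PI / 2 - rho m l b) + (PI / 2 - rho m l b0)) <= b ^ 2 ->
  b * sqrt (jap l) >= delta / 2.
Proof.
  intros Hm Hl HMc Hd Hsmall Hb Hb0 Hin Hsq.
  pose proof (angle_mul_jap_le m l b Hm Hl ltac:(lra)) as Hang.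
  pose proof (angle_mul_jap_le m l b0 Hm Hl ltac:(lra)) as Hang0.
  set (J := jap l) in *. set (sJ := sqrt J) in *.
  assert (HsJ2 : sJ ^ 2 = J) by (apply pow2_sqrt, sqrt_pos).
  assert (HsJ : 0 <= sJ) by apply sqrt_pos.
  assert (HJ : 0 <= J) by apply sqrt_pos.
  apply Rle_ge, (half_le_of_sqr_lower (b * sJ) (b0 * sJ) delta Mc m); try assumption; [nra | lra |].
  replace ((b * sJ) ^ 2) with (b ^ 2 * J) by (rewrite <- HsJ2; ring).
  replace ((b0 * sJ) ^ 2) with (b0 ^ 2 * J) by (rewrite <- HsJ2; ring).
  apply Rmult_le_compat_r with (r := J) in Hsq; [|exact HJ].
  apply Rmult_le_compat_l with (r := Mc) in Hang, Hang0; [|exact HMc..].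
  nra.
Qed.

Theorem corollary4p2 (m lam C : R) :
  0 < m -> 0 < lam -> 0 < C ->
  exists c : R, 0 < c /\
    forall (T eps : R) (F : R -> R -> R),
      0 < T -> 0 < eps ->
      cont_on_strip T F ->
      (forall t r, 0 <= t <= T -> 0 < r ->
         Rabs (F t r) <= C * eps ^ 2 / (1 + r ^ 2 + t ^ 2)) ->
      forall delta : R, 0 < delta < 1 -> eps <= c * delta ^ 2 ->
      forall l : R, 0 < l ->
      forall th a : R -> R,
        cont_on_interval T th -> cont_on_interval T a ->
        (forall t, 0 <= t <= T -> 0 < a t) ->
        (forall t, 0 < t < T ->
           is_derive th t
             (- lam * F t (Rt m t l (th t) (a t)) * da_Rt m t l (th t) (a t))) ->
        (forall t, 0 < t < T ->
           is_derive a t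
             (lam * F t (Rt m t l (th t) (a t)) * dth_Rt m t l (th t) (a t))) ->
        inD delta (th 0) (a 0) l ->
        forall t, 0 <= t <= T -> inD (delta / 2) (th t) (a t) l.
Proof.
  intros Hm Hlam HC.
  set (N := 1 + 4 * lam * C / m + 32 * lam * C * (4 * m + 11)).
  assert (HlC : 0 <= 4 * lam * C / m) by (apply Rdiv_le_0_compat; nra).
  assert (HlC' : 0 <= 32 * lam * C * (4 * m + 11)) by (apply Rmult_le_pos; nra).
  assert (HN1 : 4 * lam * C / m <= N) by (unfold N; lra).
  assert (HN2 : 32 * lam * C * (4 * m + 11) <= N) by (unfold N; lra).
  exists (/ sqrt N). split; [apply Rinv_0_lt_compat, sqrt_lt_R0; unfold N; lra|].
  intros T eps F HT Heps _ HF delta Hd Hed l Hl th a Hth Ha Hapos Hthd Had [Ha0 [_ Hin]] t Ht.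
  destruct (smallness_of_eps m lam C N eps delta Hm Hlam HC HN1 HN2 Hd ltac:(lra) Hed)
    as [HK HKd].
  split; [now apply Hapos | split; [exact Hl|]].
  apply (half_delta_le m l (4 * lam * (C * eps ^ 2)) delta (a t) (a 0)); try assumption.
  - nra.
  - now apply Hapos.
  - exact (a_sqr_lower m lam (C * eps ^ 2) T l F th a Hm Hlam ltac:(nra) HK Hl HF
             Hth Ha Hapos Hthd Had t Ht).
Qed.
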